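(* Let $\overrightarrow{U}(t)$ be a closed unit timelike dual curve in the 3-dimensional dual Lorentzian space with dual Frenet frame $\{\overrightarrow{U_1},\overrightarrow{U_2},\overrightarrow{U_3}\}$, dual curvature $\kappa$ and dual torsion $\tau$, let $\Phi=\varphi+\varepsilon\varphi^*$ be a constant dual number, let $(V_1)$ be the parallel ruled surface of $(U_1)$, corresponding to $\overrightarrow{V_1}=\cosh\Phi\,\overrightarrow{U_1}+\sinh\Phi\,\overrightarrow{U_3}$, and let $(V_2)$ be the closed ruled surface corresponding to $\overrightarrow{V_2}=\overrightarrow{U_2}$. With $P=p+\varepsilon p^*=\kappa\cosh\Phi+\tau\sinh\Phi$ and $Q=q+\varepsilon q^*=-\kappa\sinh\Phi-\tau\cosh\Phi$, the pitch, the dual angle of pitch and the drall of $(V_2)$ are $$L_{V_2}=0,\qquad \Lambda_{V_2}=0,\qquad P_{V_2}=\frac{qq^*-pp^*}{q^2-p^2}.$$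
   Context: Dual numbers are $\lambda+\varepsilon\lambda^*$ with $\lambda,\lambda^*\in\mathbb{R}$ and $\varepsilon^2=0$; dual vectors are $\overrightarrow{A}=\overrightarrow{a}+\varepsilon\overrightarrow{a}^*$ with $\overrightarrow{a},\overrightarrow{a}^*\in\mathbb{R}^3$. The Lorentzian inner product on $\mathbb{R}^3$ is $\langle a,b\rangle=-a_1b_1+a_2b_2+a_3b_3$, extended to dual vectors by $\langle \overrightarrow{A},\overrightarrow{B}\rangle=\langle\overrightarrow{a},\overrightarrow{b}\rangle+\varepsilon(\langle\overrightarrow{a},\overrightarrow{b}^*\rangle+\langle\overrightarrow{a}^*,\overrightarrow{b}\rangle)$. For a dual number $\Phi=\varphi+\varepsilon\varphi^*$: $\sinh\Phi=\sinh\varphi+\varepsilon\varphi^*\cosh\varphi$, $\cosh\Phi=\cosh\varphi+\varepsilon\varphi^*\sinh\varphi$. The closed unit timelike dual curve $\overrightarrow{U}(t)$ (integrals $\oint$ over one closed period of $t$) has Frenet frame $\overrightarrow{U_1}=\overrightarrow{U}$ (timelike), $\overrightarrow{U_2},\overrightarrow{U_3}$ (spacelike), mutually orthogonal unit dual vectors, satisfying $\overrightarrow{U_1}'=\kappa\overrightarrow{U_2}$, $\overrightarrow{U_2}'=\kappa\overrightarrow{U_1}-\tau\overrightarrow{U_3}$, $\overrightarrow{U_3}'=\tau\overrightarrow{U_2}$. Set $\overrightarrow{V_3}=-\sinh\Phi\,\overrightarrow{U_1}-\cosh\Phi\,\overrightarrow{U_3}$; then $\overrightarrow{V_1}'=P\overrightarrow{V_2}$,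 $\overrightarrow{V_2}'=P\overrightarrow{V_1}-Q\overrightarrow{V_3}$, $\overrightarrow{V_3}'=Q\overrightarrow{V_2}$. Write $\overrightarrow{V_i}=\overrightarrow{v_i}+\varepsilon\overrightarrow{v_i}^*$. The dual Steiner vector is taken (frame vectors written outside the integrals) as $\overrightarrow{D}=\overrightarrow{d}+\varepsilon\overrightarrow{d}^*=\overrightarrow{U_1}\oint\tau\,dt-\overrightarrow{U_3}\oint\kappa\,dt=-\overrightarrow{V_1}\oint Q\,dt+\overrightarrow{V_3}\oint P\,dt$, so $\overrightarrow{d}=-\overrightarrow{v_1}\oint q\,dt+\overrightarrow{v_3}\oint p\,dt$, $\overrightarrow{d}^*=-\overrightarrow{v_1}\oint q^*dt-\overrightarrow{v_1}^*\oint q\,dt+\overrightarrow{v_3}\oint p^*dt+\overrightarrow{v_3}^*\oint p\,dt$. For the closed ruled surface corresponding to a unit dual curve $\overrightarrow{X}=\overrightarrow{x}+\varepsilon\overrightarrow{x}^*$: pitch $L_X=\langle\overrightarrow{d},\overrightarrow{x}^*\rangle+\langle\overrightarrow{d}^*,\overrightarrow{x}\rangle$, dual angle of pitch $\Lambda_X=-\langle\overrightarrow{D},\overrightarrow{X}\rangle$, drall $P_X=\langle d\overrightarrow{x},d\overrightarrow{x}^*\rangle/\langle d\overrightarrow{x},d\overrightarrow{x}\rangle$. *)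

From Stdlib Require Import Reals.
From Coquelicot Require Import Coquelicot.
Open Scope R_scope.

Record vec3 := V3 { x1 : R; x2 : R; x3 : R }.
Definition lor (a b : vec3) : R := - x1 a * x1 b + x2 a * x2 b + x3 a * x3 b.
Definition vadd (a b : vec3) : vec3 := V3 (x1 a + x1 b) (x2 a + x2 b) (x3 a + x3 b).
Definition vscal (r : R) (a : vec3) : vec3 := V3 (r * x1 a) (r * x2 a) (r * x3 a).
Definition vopp (a : vec3) : vec3 := vscal (-1) a.

Record dnum := Dn { re : R; du : R }.
Definition dconst (r : R) : dnum := Dn r 0.
Definition dadd (a b : dnum) : dnum := Dn (re a + re b) (du a + du b).
Definition dopp (a : dnum) : dnum := Dn (- re a) (- du a).
Definition dmul (a b : dnum) : dnum := Dn (re a * re b) (re a * du b + du a * re b).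
Definition dsinh (F : dnum) : dnum := Dn (sinh (re F)) (du F * cosh (re F)).
Definition dcosh (F : dnum) : dnum := Dn (cosh (re F)) (du F * sinh (re F)).

Record dvec := Dv { vr : vec3; vd : vec3 }.
Definition dvadd (A B : dvec) : dvec := Dv (vadd (vr A) (vr B)) (vadd (vd A) (vd B)).
Definition dvopp (A : dvec) : dvec := Dv (vopp (vr A)) (vopp (vd A)).
Definition dvscal (L : dnum) (A : dvec) : dvec :=
  Dv (vscal (re L) (vr A)) (vadd (vscal (re L) (vd A)) (vscal (du L) (vr A))).
Definition dlor (A B : dvec) : dnum :=
  Dn (lor (vr A) (vr B)) (lor (vr A) (vd B) + lor (vd A) (vr B)).

Definition is_vderive (f : R -> vec3) (t : R) (l : vec3) : Prop :=
  is_derive (fun s => x1 (f s)) t (x1 l) /\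
  is_derive (fun s => x2 (f s)) t (x2 l) /\
  is_derive (fun s => x3 (f s)) t (x3 l).
Definition is_dvderive (X : R -> dvec) (t : R) (L : dvec) : Prop :=
  is_vderive (fun s => vr (X s)) t (vr L) /\ is_vderive (fun s => vd (X s)) t (vd L).
Definition vDerive (f : R -> vec3) (t : R) : vec3 :=
  V3 (Derive (fun s => x1 (f s)) t) (Derive (fun s => x2 (f s)) t)
     (Derive (fun s => x3 (f s)) t).

Definition dint (T : R) (f : R -> dnum) : dnum :=
  Dn (RInt (fun s => re (f s)) 0 T) (RInt (fun s => du (f s)) 0 T).

(** Dual Steiner vector at parameter t (frame vectors outside the integrals):
    D = U1 * oint tau - U3 * oint kappa. *)
Definition steiner (T : R) (kappa tau : R -> dnum) (U1 U3 : R -> dvec) (t : R) : dvec :=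
  dvadd (dvscal (dint T tau) (U1 t)) (dvopp (dvscal (dint T kappa) (U3 t))).

Definition pitch (D X : dvec) : R := lor (vr D) (vd X) + lor (vd D) (vr X).
Definition pitch_angle (D X : dvec) : dnum := dopp (dlor D X).
(** drall  P_X = <dx, dx*> / <dx, dx>  (dt cancels) *)
Definition drall (X : R -> dvec) (t : R) : R :=
  lor (vDerive (fun s => vr (X s)) t) (vDerive (fun s => vd (X s)) t) /
  lor (vDerive (fun s => vr (X s)) t) (vDerive (fun s => vr (X s)) t).

(* The Steiner vector D is a dual combination of U1 and U3, both orthogonal to
   U2, so <D, U2> = 0; its dual part is the pitch, and its negative is the dual
   angle of pitch.  For the drall, U2' = kappa U1 - tau U3 has dual square norm
   tau^2 - kappa^2, and the hyperbolic rotation by Phi taking (kappa, tau) to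
   (P, -Q) preserves this quantity: Q^2 - P^2 = tau^2 - kappa^2. *)

From Stdlib Require Import Reals Lra Psatz.
From Coquelicot Require Import Coquelicot.
Open Scope R_scope.

Lemma dnum_ext (a b : dnum) : re a = re b -> du a = du b -> a = b.
Proof. destruct a, b; simpl; intros -> ->; reflexivity. Qed.

Lemma cosh_sq_sub_sinh_sq (f : R) : cosh f * cosh f - sinh f * sinh f = 1.
Proof.
  unfold cosh, sinh.
  assert (Hexp : exp f * exp (- f) = 1).
  { rewrite <- exp_plus, Rplus_opp_r; apply exp_0. }
  field_simplify; nra.
Qed.

Lemma lor_sym (a b : vec3) : lor a b = lor b a.
Proof. unfold lor; ring. Qed.

Lemma dlor_sym (A B : dvec) : dlor A B = dlor B A.
Proof. unfold dlor; rewrite !(lor_sym (vr A)), (lor_sym (vd A)); f_equal; ring. Qed.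

Lemma dlor_dvaddl (A B C : dvec) : dlor (dvadd A B) C = dadd (dlor A C) (dlor B C).
Proof.
  destruct A as [[] []], B as [[] []], C as [[] []].
  apply dnum_ext; simpl; unfold lor; simpl; ring.
Qed.

Lemma dlor_dvscall (L : dnum) (A B : dvec) : dlor (dvscal L A) B = dmul L (dlor A B).
Proof.
  destruct L, A as [[] []], B as [[] []].
  apply dnum_ext; simpl; unfold lor; simpl; ring.
Qed.

Lemma dlor_dvoppl (A B : dvec) : dlor (dvopp A) B = dopp (dlor A B).
Proof.
  destruct A as [[] []], B as [[] []].
  apply dnum_ext; simpl; unfold lor; simpl; ring.
Qed.

Lemma dlor_dvaddr (A B C : dvec) : dlor A (dvadd B C) = dadd (dlor A B) (dlor A C).
Proof. now rewrite dlor_sym, dlor_dvaddl, (dlor_sym B), (dlor_sym C). Qed.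

Lemma dlor_dvscalr (L : dnum) (A B : dvec) : dlor A (dvscal L B) = dmul L (dlor A B).
Proof. now rewrite dlor_sym, dlor_dvscall, dlor_sym. Qed.

Lemma dlor_dvoppr (A B : dvec) : dlor A (dvopp B) = dopp (dlor A B).
Proof. now rewrite dlor_sym, dlor_dvoppl, dlor_sym. Qed.

Lemma pitch_dlor (D X : dvec) : pitch D X = du (dlor D X).
Proof. reflexivity. Qed.

Lemma dlor_steiner_orthogonal (T : R) (kappa tau : R -> dnum) (U1 U3 : R -> dvec)
    (t : R) (X : dvec) :
  dlor (U1 t) X = dconst 0 -> dlor (U3 t) X = dconst 0 ->
  dlor (steiner T kappa tau U1 U3 t) X = dconst 0.
Proof.
  intros H1 H3; unfold steiner.
  rewrite dlor_dvaddl, dlor_dvoppl, !dlor_dvscall, H1, H3.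
  apply dnum_ext; simpl; ring.
Qed.

Lemma vDerive_unique (f : R -> vec3) (t : R) (l : vec3) :
  is_vderive f t l -> vDerive f t = l.
Proof.
  intros [H1 [H2 H3]]; unfold vDerive.
  destruct l; simpl in *; f_equal; apply is_derive_unique; assumption.
Qed.

(* The dual part of <W, W> is 2 <w, w*>. *)
Lemma drall_dlor_derivative (X : R -> dvec) (t : R) (W : dvec) :
  is_dvderive X t W -> drall X t = (du (dlor W W) / 2) / re (dlor W W).
Proof.
  intros [Dr Dd]; unfold drall, dlor; simpl.
  rewrite (vDerive_unique _ _ _ Dr), (vDerive_unique _ _ _ Dd), (lor_sym (vd W)).
  f_equal; field.
Qed.

Lemma dlor_timelike_spacelike_comb (A B : dvec) (a b : dnum) :
  dlor A A = dconst (-1) -> dlor B B = dconst 1 -> dlor A B = dconst 0 ->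
  let W := dvadd (dvscal a A) (dvopp (dvscal b B)) in
  dlor W W = dadd (dmul b b) (dopp (dmul a a)).
Proof.
  intros HA HB HAB W; unfold W.
  rewrite dlor_dvaddl, !dlor_dvaddr, !dlor_dvoppl, !dlor_dvoppr,
    !dlor_dvscall, !dlor_dvscalr, (dlor_sym B A), HA, HB, HAB.
  destruct a, b; apply dnum_ext; simpl; ring.
Qed.

Lemma hyperbolic_rotation_invariant (x y F : dnum) :
  let P := dadd (dmul x (dcosh F)) (dmul y (dsinh F)) in
  let Q := dopp (dadd (dmul x (dsinh F)) (dmul y (dcosh F))) in
  re Q ^ 2 - re P ^ 2 = re y ^ 2 - re x ^ 2 /\
  re Q * du Q - re P * du P = re y * du y - re x * du x.
Proof.
  destruct x as [x x'], y as [y y'], F as [f f']; simpl.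
  pose proof (cosh_sq_sub_sinh_sq f) as Hcs.
  set (c := cosh f) in *; set (s := sinh f) in *.
  (* Both differences are multiples of cosh^2 f - sinh^2 f - 1. *)
  split.
  - pose proof (f_equal (Rmult (y ^ 2 - x ^ 2)) Hcs); lra.
  - pose proof (f_equal (Rmult (y * y' - x * x')) Hcs); lra.
Qed.

Theorem theorem2p2 (U1 U2 U3 : R -> dvec) (kappa tau : R -> dnum) (T : R) (Phi : dnum) :
  0 < T ->
  (forall t, U1 (t + T) = U1 t) ->
  (forall t, kappa (t + T) = kappa t) ->
  (forall t, tau (t + T) = tau t) ->
  (forall t, dlor (U1 t) (U1 t) = dconst (-1)) ->
  (forall t, dlor (U2 t) (U2 t) = dconst 1) ->
  (forall t, dlor (U3 t) (U3 t) = dconst 1) ->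
  (forall t, dlor (U1 t) (U2 t) = dconst 0) ->
  (forall t, dlor (U1 t) (U3 t) = dconst 0) ->
  (forall t, dlor (U2 t) (U3 t) = dconst 0) ->
  (forall t, is_dvderive U1 t (dvscal (kappa t) (U2 t))) ->
  (forall t, is_dvderive U2 t
     (dvadd (dvscal (kappa t) (U1 t)) (dvopp (dvscal (tau t) (U3 t))))) ->
  (forall t, is_dvderive U3 t (dvscal (tau t) (U2 t))) ->
  let V1 := fun t => dvadd (dvscal (dcosh Phi) (U1 t)) (dvscal (dsinh Phi) (U3 t)) in
  let V2 := U2 in
  let P := fun t => dadd (dmul (kappa t) (dcosh Phi)) (dmul (tau t) (dsinh Phi)) in
  let Q := fun t => dopp (dadd (dmul (kappa t) (dsinh Phi)) (dmul (tau t) (dcosh Phi))) in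
  forall t,
    let D := steiner T kappa tau U1 U3 t in
    pitch D (V2 t) = 0 /\
    pitch_angle D (V2 t) = dconst 0 /\
    drall V2 t =
      (re (Q t) * du (Q t) - re (P t) * du (P t)) / (re (Q t) ^ 2 - re (P t) ^ 2).
Proof.
  intros _ _ _ _ H11 _ H33 H12 H13 H23 _ DU2 _ V1 V2 P Q t D.
  assert (HD : dlor D (U2 t) = dconst 0).
  { apply dlor_steiner_orthogonal; [apply H12 | rewrite dlor_sym; apply H23]. }
  destruct (hyperbolic_rotation_invariant (kappa t) (tau t) Phi) as [Hre Hdu].
  unfold V2; split; [|split].
  - rewrite pitch_dlor, HD; reflexivity.
  - unfold pitch_angle; rewrite HD; apply dnum_ext; simpl; ring.
  - rewrite (drall_dlor_derivative _ _ _ (DU2 t)),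
      dlor_timelike_spacelike_comb by auto.
    unfold P, Q; rewrite Hre, Hdu; destruct (kappa t), (tau t); simpl.
    f_equal; [field | ring].
Qed.
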